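(* Let $\varepsilon\in[0,1)$ and $\mathcal{P},\mathcal{E}\subseteq\mathcal{D}(P)$. (a) If $\mathcal{B}_\varepsilon(\mathcal{P})\cap\mathcal{E}\neq\emptyset$, then $\beta\overline{C}_{\mathrm{TO},\varepsilon}(\mathcal{P},\mathcal{E})=0$, and this zero cost is achieved by a thermal operation of the form $\mathcal{F}(\cdot)=\operatorname{tr}[\cdot]\,\tau$ for a suitable $\tau\in\mathcal{E}$ (discarding the input and preparing $\tau$). (b) If $T(\mathcal{P},\mathcal{E})>\varepsilon$, then $$\beta\overline{C}_{\mathrm{GPL},\varepsilon}(\mathcal{P},\mathcal{E})\ge\log\frac{T(\mathcal{P},\mathcal{E})-\varepsilon}{\operatorname{diam}(\mathcal{E})},$$ with the conventions that $\operatorname{diam}(\mathcal{E})=0$ when $\mathcal{E}$ is a singleton (so the right side is $\log\infty=\infty$).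
   Context: All Hilbert spaces are finite-dimensional; $\mathcal{D}(P)$ is the set of density operators on $P$; $T(X,Y)=\tfrac12\|X-Y\|_1$; $\mathcal{B}_\varepsilon(\mathcal{P})=\{\omega\in\mathcal{D}:T(\omega,\rho)\le\varepsilon\text{ for some }\rho\in\mathcal{P}\}$; $T(\mathcal{P},\mathcal{E})=\inf_{\rho\in\mathcal{P},\tau\in\mathcal{E}}T(\rho,\tau)$; $\operatorname{diam}(\mathcal{E})=\sup_{\tau,\tau'\in\mathcal{E}}T(\tau,\tau')$. Battery: qubit $B$ with basis $\{|0\rangle,|1\rangle\}$, $\pi_M=(1-\tfrac1M)|0\rangle\langle0|+\tfrac1M|1\rangle\langle1|$ for $M>1$, $\Pi_M=\{\pi_{M'}:M'\in[M,\infty)\}$. The one-shot work cost from a dirty battery under a class $\mathfrak{F}$ is $\beta\overline{C}_{\mathfrak{F},\varepsilon}(\mathcal{P},\mathcal{E})=\log\inf\{M>1:\exists\mathcal{F}\in\mathfrak{F}\text{ with }T(\mathcal{F}(|1\rangle\langle1|),\rho)\le\varepsilon\text{ for some }\rho\in\mathcal{P}\text{ and }\mathcal{F}(\sigma)\in\mathcal{E}\ \forall\sigma\in\Pi_M\}$ (with $\log\inf\emptyset=+\infty$). GPL is the class of all linear maps (Gibbs preservation being the condition $\mathcal{F}(\Pi_M)\subseteq\mathcal{E}$); TO is the class of thermal operations, i.e. maps $\rho\mapsto\operatorname{tr}_{\text{rest}}[U(\rho\otimes\tau^E)U^\dagger]$ with $\tau^E$ an ancilla Gibbs state and $U$ energy-conserving;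 replacer maps $\operatorname{tr}[\cdot]\tau$ are thermal operations (taking an ancilla with Gibbs state $\tau$ and $U=I$). *)

From HB Require Import structures.
From mathcomp Require Import all_boot all_order all_algebra.
From mathcomp Require Import sesquilinear spectral.
From mathcomp Require Import complex.
From mathcomp Require mxtens.
From mathcomp Require Import all_classical all_reals.
From mathcomp Require Import ereal topology normedtype sequences exp.

Set Implicit Arguments.
Unset Strict Implicit.
Unset Printing Implicit Defensive.

Import Order.TTheory GRing.Theory Num.Theory.
Local Open Scope ring_scope.
Local Open Scope classical_set_scope.
Local Open Scope sesquilinear_scope.
Local Open Scope complex_scope.

Section QDefs.
Variable R : realType.
Local Notation C := R[i].

Definition adj m n (A : 'M[C]_(m, n)) : 'M[C]_(n, m) := A ^t*.

(* positive semidefinite matrices (order on C: 0 <= z iff z is real nonneg) *)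
Definition psdmx n (A : 'M[C]_n) : Prop :=
  forall v : 'rV[C]_n, 0 <= (v *m A *m adj v) 0 0.

Definition density n : set 'M[C]_n := [set A | psdmx A /\ \tr A = 1].

Definition psd_sqrt n (A : 'M[C]_n) : 'M[C]_n :=
  xget 0 [set B | psdmx B /\ B *m B = A].
Definition trnorm n (A : 'M[C]_n) : R :=
  complex.Re (\tr (psd_sqrt (adj A *m A))).

Definition tdist n (X Y : 'M[C]_n) : R := trnorm (X - Y) / 2.

Definition ball_set n (eps : R) (P : set 'M[C]_n) : set 'M[C]_n :=
  [set w | density w /\ exists rho, P rho /\ tdist w rho <= eps].

Definition tdist_sets n (P E : set 'M[C]_n) : \bar R :=
  ereal_inf [set x | exists rho tau, P rho /\ E tau /\ x = (tdist rho tau)%:E].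
Definition diam_set n (E : set 'M[C]_n) : \bar R :=
  ereal_sup [set x | exists tau tau', E tau /\ E tau' /\ x = (tdist tau tau')%:E].

Definition ket1bra1 : 'M[C]_2 := delta_mx 1 1.
Definition piM (M : R) : 'M[C]_2 :=
  \matrix_(i, j) if i == j then
                   (if i == 0 then (1 - M^-1)%:C else (M^-1)%:C) else 0.
Definition PiM (M : R) : set 'M[C]_2 := [set s | exists M', M <= M' /\ s = piM M'].

Definition feasible n (eps : R) (P E : set 'M[C]_n) (M : R)
  (F : 'M[C]_2 -> 'M[C]_n) : Prop :=
  (exists rho, P rho /\ tdist (F ket1bra1) rho <= eps) /\
  (forall s, PiM M s -> E (F s)).

(* one-shot work cost from a dirty battery, beta * C-bar (log inf, log inf0 = +oo) *)
Definition work_cost n (cls : set ('M[C]_2 -> 'M[C]_n)) (eps : R)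
  (P E : set 'M[C]_n) : \bar R :=
  let S := [set M : R | 1 < M /\ exists F, cls F /\ feasible eps P E M F] in
  if `[< S = set0 >] then +oo%E else (ln (inf S))%:E.

Definition GPL n : set ('M[C]_2 -> 'M[C]_n) := [set F | linear F].

(* Hamiltonians are given by spectral data: H = W^dagger diag(h) W with W unitary.
   The ancilla energies may be +oo (None), so that its Gibbs state may be rank
   deficient.  beta is the inverse temperature. *)
Definition gibbs_weight (beta : R) (x : option R) : R :=
  if x is Some y then expR (- (beta * y)) else 0.

Definition gibbs_state (beta : R) e (V : 'M[C]_e) (E : 'I_e -> option R) : 'M[C]_e :=
  let w := fun j => gibbs_weight beta (E j) in
  let Z := \sum_j w j in
  adj V *m diag_mx (\row_j (w j / Z)%:C) *m V.

Definition tens m n p q (A : 'M[C]_(m, n)) (B : 'M[C]_(p, q)) : 'M[C]_(m * p, n * q) :=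
  mxtens.tensmx A B.

Definition ptrace n r (X : 'M[C]_(n * r)) : 'M[C]_n :=
  \matrix_(i, k) \sum_(j < r) X (mxtens.mxtens_index (i, j)) (mxtens.mxtens_index (k, j)).

Definition tot_energy e (hB : 'I_2 -> R) (E : 'I_e -> option R) (k : 'I_(2 * e)) : option R :=
  let ij := mxtens.mxtens_unindex k in
  if E ij.2 is Some x then Some (hB ij.1 + x) else None.

(* U commutes with H_B (x) I + I (x) H_E: block diagonal in the energy eigenbasis *)
Definition energy_conserving e (WB : 'M[C]_2) (hB : 'I_2 -> R)
  (V : 'M[C]_e) (E : 'I_e -> option R) (U : 'M[C]_(2 * e)) : Prop :=
  let X := tens WB V in
  forall k l, tot_energy hB E k <> tot_energy hB E l -> (X *m U *m adj X) k l = 0.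

Definition thermal_op n (beta : R) (WB : 'M[C]_2) (hB : 'I_2 -> R) :
  set ('M[C]_2 -> 'M[C]_n) :=
  [set F | exists (e r : nat) (V : 'M[C]_e) (E : 'I_e -> option R)
             (U : 'M[C]_(2 * e)) (sig : 'I_(n * r) -> 'I_(2 * e)),
     [/\ (V \is unitarymx /\ U \is unitarymx), (exists j, E j <> None),
         energy_conserving WB hB V E U, bijective sig &
         forall rho, F rho =
           ptrace (\matrix_(k, l)
             (U *m tens rho (gibbs_state beta V E) *m adj U) (sig k) (sig l))]].

Definition replacer n (tau : 'M[C]_n) : 'M[C]_2 -> 'M[C]_n := fun s => \tr s *: tau.

Definition rhs_b n (eps : R) (P E : set 'M[C]_n) : \bar R :=
  if diam_set E == 0%E then +oo%E
  else (ln (fine (tdist_sets P E - eps%:E) / fine (diam_set E)))%:E.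

End QDefs.

Arguments density {R} n _.
Arguments GPL {R} n _.
Arguments thermal_op {R} n beta WB hB _.

(* (a) Discarding the battery and preparing tau is a thermal operation: tau is the Gibbs
   state of an ancilla whose level j has energy -ln(p_j)/beta, with p_j the eigenvalues of
   tau.  If tau lies in E and eps-close to P, this map is feasible for every M > 1, so the
   infimum of the feasible M is 1.
   (b) A linear F sends pi_M' to F|0><0| + G/M', with G = F|1><1| - F|0><0| hermitian, and
   t := T(F|1><1|, F|0><0|) = ||G||_1/2.  The triangle inequality through F|1><1| gives
   T(P, E) <= eps + (1 - 1/M) t, while pi_M and pi_{M^2} both land in E, so
   diam(E) >= (1/M - 1/M^2) t.  Hence T(P, E) - eps <= M diam(E) for every feasible M. *)

From HB Require Import structures.
From mathcomp Require Import all_boot all_order all_algebra.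
From mathcomp Require Import sesquilinear spectral.
From mathcomp Require Import complex.
From mathcomp Require mxtens.
From mathcomp Require Import all_classical all_reals.
From mathcomp Require Import ereal topology normedtype sequences exp.
From mathcomp Require Import ring.

Set Implicit Arguments.
Unset Strict Implicit.
Unset Printing Implicit Defensive.

Import Order.TTheory GRing.Theory Num.Theory.
Local Open Scope ring_scope.
Local Open Scope classical_set_scope.
Local Open Scope sesquilinear_scope.

Section HermitianMatrices.
Variable R : realType.
Local Notation C := R[i].

Definition hermmx n (A : 'M[C]_n) : Prop := A^t* = A.

Lemma adjmxM m n p (A : 'M[C]_(m, n)) (B : 'M[C]_(n, p)) :
  (A *m B)^t* = B^t* *m A^t*.
Proof. by rewrite trmx_mul map_mxM. Qed.

Lemma hermmxD n (A B : 'M[C]_n) : hermmx A -> hermmx B -> hermmx (A + B).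
Proof. by rewrite /hermmx linearD /= map_mxD => -> ->. Qed.

Lemma hermmxZ n (c : C) (A : 'M[C]_n) : c \is Num.real -> hermmx A -> hermmx (c *: A).
Proof.
rewrite CrealE => /eqP cr /matrixP hA; apply/matrixP => i j.
by move: (hA i j); rewrite !mxE rmorphM /= cr => ->.
Qed.

Lemma hermmxB n (A B : 'M[C]_n) : hermmx A -> hermmx B -> hermmx (A - B).
Proof. by move=> hA hB; rewrite -scaleN1r; apply/hermmxD/hermmxZ; rewrite ?rpredN1. Qed.

Lemma hermmx_spectral n (A : 'M[C]_n) : hermmx A ->
  exists W (l : 'rV[C]_n), [/\ W \is unitarymx, forall i, l 0 i \is Num.real &
     A = W^t* *m diag_mx l *m W].
Proof.
move=> hA; have hs : A \is hermsymmx by apply/is_hermitianmxP; rewrite expr0 scale1r hA.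
exists (spectralmx A), (spectral_diag A); split.
- exact: spectral_unitarymx.
- by move=> i; have /mxOverP := hermitian_spectral_diag_real hs; apply.
- have /orthomx_spectralP {1}-> := hermitian_normalmx hs.
  by rewrite invmx_unitary // spectral_unitarymx.
Qed.

Section Spectral.
Variables (n : nat) (W : 'M[C]_n).
Hypothesis uW : W \is unitarymx.

Lemma mulmx_spectral (a b : 'rV[C]_n) :
  (W^t* *m diag_mx a *m W) *m (W^t* *m diag_mx b *m W) =
  W^t* *m diag_mx (\row_j (a 0 j * b 0 j)) *m W.
Proof. by rewrite -mulmx_diag !mulmxA mulmxtVK. Qed.

Lemma mxtrace_spectral (l : 'rV[C]_n) : \tr (W^t* *m diag_mx l *m W) = \sum_j l 0 j.
Proof. by rewrite mxtrace_mulC mulmxA (unitarymxP uW) mul1mx mxtrace_diag. Qed.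

End Spectral.

Lemma norm_diag_conj_le n (K : 'M[C]_n) (s : 'rV[C]_n) i :
  K \is unitarymx -> (forall k, `|s 0 k| <= 1) -> `|(K *m diag_mx s *m K^t*) i i| <= 1.
Proof.
move=> /unitarymxP /matrixP /(_ i i) uK hs.
have -> : (K *m diag_mx s *m K^t*) i i = \sum_k s 0 k * (K i k * (K i k)^*).
  by rewrite mxE; apply: eq_bigr => k _; rewrite mul_mx_diag !mxE mulrCA mulrA.
have e1 : \sum_k K i k * (K i k)^* = 1.
  by move: uK; rewrite !mxE eqxx mulr1n => <-; apply: eq_bigr => k _; rewrite !mxE.
rewrite -[X in _ <= X]e1; apply: le_trans (ler_norm_sum _ _ _) _; apply: ler_sum => k _.
rewrite normrM [X in _ * X]ger0_norm ?mul_conjC_ge0 //.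
by apply: ler_piMl; rewrite ?mul_conjC_ge0.
Qed.

Lemma mxtrace_rot (T : comPzRingType) n (A B C D E F : 'M[T]_n) :
  \tr (A *m B *m C *m (D *m E *m F)) = \tr (F *m A *m B *m (C *m D) *m E).
Proof. by rewrite !mulmxA mxtrace_mulC !mulmxA. Qed.

Lemma norm_mxtrace_spectral_le n (U W : 'M[C]_n) (l s : 'rV[C]_n) :
  U \is unitarymx -> W \is unitarymx -> (forall k, `|s 0 k| <= 1) ->
  `|\tr ((W^t* *m diag_mx s *m W) *m (U^t* *m diag_mx l *m U))| <= \sum_i `|l 0 i|.
Proof.
move=> uU uW hs.
have uK : U *m W^t* \is unitarymx := mul_unitarymx uU (etrans (trmxC_unitary W) uW).
have -> : \tr ((W^t* *m diag_mx s *m W) *m (U^t* *m diag_mx l *m U)) =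
          \tr ((U *m W^t*) *m diag_mx s *m (U *m W^t*)^t* *m diag_mx l).
  by rewrite adjmxM trmxCK mxtrace_rot.
rewrite /mxtrace; apply: le_trans (ler_norm_sum _ _ _) _; apply: ler_sum => i _.
by rewrite mul_mx_diag mxE normrM; apply: ler_piMl; rewrite ?norm_diag_conj_le.
Qed.

Definition formmx n (A : 'M[C]_n) (u v : 'rV[C]_n) : C := (u *m A *m v^t*) 0 0.

Lemma formmxDl n (A : 'M[C]_n) u1 u2 v : formmx A (u1 + u2) v = formmx A u1 v + formmx A u2 v.
Proof. by rewrite /formmx !mulmxDl mxE. Qed.

Lemma formmxDr n (A : 'M[C]_n) u v1 v2 : formmx A u (v1 + v2) = formmx A u v1 + formmx A u v2.
Proof. by rewrite /formmx linearD /= map_mxD !mulmxDr mxE. Qed.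

Lemma formmxZl n (A : 'M[C]_n) c u v : formmx A (c *: u) v = c * formmx A u v.
Proof. by rewrite /formmx -!scalemxAl mxE. Qed.

Lemma formmxZr n (A : 'M[C]_n) c u v : formmx A u (c *: v) = c^* * formmx A u v.
Proof. by rewrite /formmx linearZ /= map_mxZ -scalemxAr mxE. Qed.

Lemma formmxD n (A B : 'M[C]_n) u v : formmx (A + B) u v = formmx A u v + formmx B u v.
Proof. by rewrite /formmx mulmxDr mulmxDl mxE. Qed.

Lemma formmxN n (A : 'M[C]_n) u v : formmx (- A) u v = - formmx A u v.
Proof. by rewrite /formmx mulmxN mulNmx mxE. Qed.

Lemma formmxB n (A B : 'M[C]_n) u v : formmx (A - B) u v = formmx A u v - formmx B u v.
Proof. by rewrite formmxD formmxN. Qed.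

Lemma formmx_delta n (A : 'M[C]_n) i j : formmx A (delta_mx 0 i) (delta_mx 0 j) = A i j.
Proof. by rewrite /formmx trmx_delta map_delta_mx -rowE -colE !mxE. Qed.

Lemma formmx_conj n (A W : 'M[C]_n) v :
  formmx (W^t* *m A *m W) v v = formmx A (v *m W^t*) (v *m W^t*).
Proof. by rewrite /formmx adjmxM trmxCK !mulmxA. Qed.

Lemma formmx_diag n (d u : 'rV[C]_n) :
  formmx (diag_mx d) u u = \sum_i d 0 i * (u 0 i * (u 0 i)^*).
Proof.
by rewrite /formmx mxE; apply: eq_bigr => i _; rewrite mul_mx_diag !mxE mulrCA mulrA.
Qed.

(* Polarization: the values on e_i + e_j and e_i + 'i e_j recover A j i from A i j. *)
Lemma hermmx_real_form n (A : 'M[C]_n) :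
  (forall v, formmx A v v \is Num.real) -> hermmx A.
Proof.
move=> hA; apply/matrixP => i j; rewrite !mxE.
set ei : 'rV[C]_n := delta_mx 0 i; set ej : 'rV[C]_n := delta_mx 0 j.
have := hA (ei + ej); have := hA (ei + 'i *: ej); have := hA ei; have := hA ej.
rewrite !formmxDl !formmxDr !formmxZl !formmxZr !formmx_delta !CrealE.
move=> /eqP hj /eqP hi /eqP h2 /eqP h1; move: h1 h2.
rewrite !rmorphD !rmorphM /= !conjCK hi hj conjCi.
set x := A i j; set y := A j i; set a := A i i; set b := A j j => h1 h2.
have /eqP e : 'i * (a + x^* + (y^* + b)) - (a + 'i * x^* + (- 'i * y^* + - 'i * ('i * b)))
  - ('i * (a + x + (y + b)) - (a + - 'i * x + ('i * y + 'i * (- 'i * b)))) == 0.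
  by rewrite h1 h2 subrr.
have nz : 2%:R * 'i != 0 :> C by rewrite mulf_neq0 ?pnatr_eq0 ?neq0Ci.
by apply: (mulfI nz); apply/eqP; rewrite -subr_eq0 -e; apply/eqP; ring.
Qed.

Lemma hermmx_real_spectral n (W : 'M[C]_n) (l : 'rV[C]_n) :
  (forall i, l 0 i \is Num.real) -> hermmx (W^t* *m diag_mx l *m W).
Proof.
move=> lr; rewrite /hermmx !adjmxM trmxCK mulmxA tr_diag_mx map_diag_mx.
apply: (congr1 (fun d => W^t* *m diag_mx d *m W)).
by apply/rowP => j; rewrite !mxE; apply/CrealP.
Qed.

Section Eigenrow.
Variables (n : nat) (W : 'M[C]_n) (l : 'rV[C]_n) (i : 'I_n).
Hypotheses (uW : W \is unitarymx) (lr : forall j, l 0 j \is Num.real).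
Local Notation H := (W^t* *m diag_mx l *m W).
Local Notation v := ((delta_mx 0 i : 'rV[C]_n) *m W).

Lemma eigenrow_mulmx : v *m H = l 0 i *: v.
Proof. by rewrite !mulmxA (mulmxtVK _ uW) -rowE row_diag_mx scalemxAl. Qed.

Lemma eigenrow_adj_mulmx : H *m v^t* = l 0 i *: v^t*.
Proof.
have := congr1 (fun X => X^t*) eigenrow_mulmx.
rewrite /= adjmxM hermmx_real_spectral // => ->.
by rewrite linearZ /= map_mxZ; congr (_ *: _); apply/CrealP.
Qed.

Lemma formmx_eigenrow : formmx H v v = l 0 i.
Proof.
rewrite /formmx eigenrow_mulmx -scalemxAl mxE adjmxM mulmxA (mulmxtVK _ uW).
by rewrite trmx_delta map_delta_mx mul_delta_mx mxE mulr1.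
Qed.

Lemma formmx_eigenrow_mulmx X : formmx (X *m H) v v = l 0 i * formmx X v v.
Proof. by rewrite /formmx (mulmxA _ X) -(mulmxA _ H) eigenrow_adj_mulmx -scalemxAr mxE. Qed.

Lemma formmx_mulmx_eigenrow X : formmx (H *m X) v v = l 0 i * formmx X v v.
Proof. by rewrite /formmx (mulmxA _ H) eigenrow_mulmx -!scalemxAl mxE. Qed.

End Eigenrow.

End HermitianMatrices.

Local Open Scope complex_scope.

Section TraceNorm.
Variable R : realType.
Local Notation C := R[i].

Lemma psdmx_hermmx n (A : 'M[C]_n) : psdmx A -> hermmx A.
Proof. by move=> hA; apply: hermmx_real_form => v; apply/ger0_real/hA. Qed.

Lemma psdmx_spectral n (W : 'M[C]_n) (d : 'rV[C]_n) :
  (forall i, 0 <= d 0 i) -> psdmx (W^t* *m diag_mx d *m W).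
Proof.
move=> hd v; rewrite -[_ 0 0]/(formmx _ v v) formmx_conj formmx_diag.
by apply: sumr_ge0 => i _; rewrite mulr_ge0 ?mul_conjC_ge0.
Qed.

Lemma psdmx_spectral_ge0 n (A W : 'M[C]_n) (l : 'rV[C]_n) :
  psdmx A -> W \is unitarymx -> A = W^t* *m diag_mx l *m W -> forall j, 0 <= l 0 j.
Proof.
move=> pA uW eA j.
have -> : l 0 j = formmx (W *m A *m W^t*) (delta_mx 0 j) (delta_mx 0 j).
  rewrite eA !mulmxA (unitarymxP uW) mul1mx (mulmxtVK _ uW).
  by rewrite formmx_delta mxE eqxx mulr1n.
by rewrite -{1}[W]trmxCK formmx_conj trmxCK; apply: pA.
Qed.

Lemma psd_sqrt_uniq n (B B' : 'M[C]_n) :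
  psdmx B -> psdmx B' -> B *m B = B' *m B' -> B = B'.
Proof.
move=> pB pB' eBB.
have [W [l [uW lr eH]]] :=
  hermmx_spectral (hermmxB (psdmx_hermmx pB) (psdmx_hermmx pB')).
apply/eqP; rewrite -subr_eq0 eH; apply/eqP.
suff -> : l = 0 by rewrite linear0 mulmx0 mul0mx.
apply/rowP => i; rewrite mxE.
set v : 'rV[C]_n := delta_mx 0 i *m W.
set p := formmx B v v; set q := formmx B' v v.
have lpq : l 0 i = p - q by rewrite -formmxB eH formmx_eigenrow.
(* v is an eigenrow of B - B', and (B + B')(B - B') + (B - B')(B + B') = 2 (B^2 - B'^2) = 0. *)
have e0 : formmx ((B + B') *m (B - B')) v v + formmx ((B - B') *m (B + B')) v v = 0.
  rewrite mulmxDl !mulmxBr mulmxDr !mulmxBl eBB !(formmxD, formmxN).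
  by move: (formmx (B' *m B') v v) (formmx (B *m B') v v) (formmx (B' *m B) v v) => a b c; ring.
have e1 : formmx ((B + B') *m (B - B')) v v = l 0 i * (p + q).
  by rewrite eH formmx_eigenrow_mulmx // formmxD.
have e2 : formmx ((B - B') *m (B + B')) v v = l 0 i * (p + q).
  by rewrite eH formmx_mulmx_eigenrow // formmxD.
move: e0; rewrite e1 e2 lpq -mulr2n => /eqP; rewrite mulrn_eq0 mulf_eq0 /=.
case/orP => [/eqP //|]; rewrite paddr_eq0 ?pB ?pB' //.
by case/andP => /eqP -> /eqP ->; rewrite subrr.
Qed.

Lemma psd_sqrtE n (A B : 'M[C]_n) : psdmx B -> B *m B = A -> psd_sqrt A = B.
Proof.
move=> pB eB.
have [pS eS] := xgetPex 0 (ex_intro (fun X => psdmx X /\ X *m X = A) B (conj pB eB)).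
exact: psd_sqrt_uniq pS pB (etrans eS (esym eB)).
Qed.

Lemma trnorm_spectral n (W : 'M[C]_n) (l : 'rV[C]_n) : W \is unitarymx ->
  (forall i, l 0 i \is Num.real) ->
  (trnorm (W^t* *m diag_mx l *m W))%:C = \sum_i `|l 0 i|.
Proof.
move=> uW lr; set A := W^t* *m diag_mx l *m W.
set B := W^t* *m diag_mx (\row_i `|l 0 i|) *m W.
have pB : psdmx B by apply: psdmx_spectral => i; rewrite mxE.
have eB : B *m B = adj A *m A.
  rewrite /adj (hermmx_real_spectral _ lr) [LHS](mulmx_spectral uW) [RHS](mulmx_spectral uW).
  apply: (congr1 (fun d => W^t* *m diag_mx d *m W)).
  by apply/rowP => j; rewrite !mxE -!expr2 real_normK.
rewrite /trnorm (psd_sqrtE pB eB) (mxtrace_spectral uW).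
rewrite RRe_real; last by apply/ger0_real/sumr_ge0 => i _; rewrite mxE.
by apply: eq_bigr => i _; rewrite mxE.
Qed.

Lemma trnorm_ge0 n (X : 'M[C]_n) : hermmx X -> 0 <= trnorm X.
Proof.
move=> /hermmx_spectral[W [l [uW lr ->]]].
by rewrite -lecR trnorm_spectral // sumr_ge0.
Qed.

Lemma trnormN n (X : 'M[C]_n) : trnorm (- X) = trnorm X.
Proof.
rewrite /trnorm /adj (_ : (- X)^t* = - X^t*) ?mulNmx ?mulmxN ?opprK //.
by rewrite linearN /= map_mxN.
Qed.

Lemma trnormZ n (c : R) (X : 'M[C]_n) : hermmx X -> trnorm (c%:C *: X) = `|c| * trnorm X.
Proof.
move=> /hermmx_spectral[W [l [uW lr ->]]].
have lr' i : (c%:C *: l) 0 i \is Num.real by rewrite mxE rpredM ?complex_real.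
have -> : c%:C *: (W^t* *m diag_mx l *m W) = W^t* *m diag_mx (c%:C *: l) *m W.
  by rewrite linearZ /= -scalemxAr -scalemxAl.
apply: complexI; rewrite (trnorm_spectral uW lr').
transitivity (`|c|%:C * (trnorm (W^t* *m diag_mx l *m W))%:C); last by rewrite rmorphM.
rewrite (trnorm_spectral uW lr) mulr_sumr; apply: eq_bigr => i _.
rewrite mxE normrM; congr (_ * _).
by rewrite normc_def /= expr0n addr0 sqrtr_sqr.
Qed.

Lemma mxtrace_sign_spectral n (W : 'M[C]_n) (nu : 'rV[C]_n) :
  W \is unitarymx -> (forall j, nu 0 j \is Num.real) ->
  \tr ((W^t* *m diag_mx (\row_j (if 0 <= nu 0 j then 1 else -1)) *m W) *m
       (W^t* *m diag_mx nu *m W)) = \sum_j `|nu 0 j|.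
Proof.
move=> uW nur; rewrite (mulmx_spectral uW) (mxtrace_spectral uW).
apply: eq_bigr => j _; rewrite !mxE; case: ifPn => [/ger0_norm -> | ].
  by rewrite mul1r.
by rewrite -real_ltNge ?nur // => /ltr0_norm ->; rewrite mulN1r.
Qed.

Lemma norm_mxtrace_le_trnorm n (W X : 'M[C]_n) (s : 'rV[C]_n) :
  W \is unitarymx -> (forall k, `|s 0 k| <= 1) -> hermmx X ->
  `|\tr ((W^t* *m diag_mx s *m W) *m X)| <= (trnorm X)%:C.
Proof.
move=> uW s1 /hermmx_spectral[U [l [uU lr ->]]].
by rewrite (trnorm_spectral uU lr); apply: norm_mxtrace_spectral_le.
Qed.

(* The trace norm of X + Y is its trace against the unitary with the signs of its eigenvalues. *)
Lemma ler_trnormD n (X Y : 'M[C]_n) : hermmx X -> hermmx Y ->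
  trnorm (X + Y) <= trnorm X + trnorm Y.
Proof.
move=> hX hY; have [W [nu [uW nur eXY]]] := hermmx_spectral (hermmxD hX hY).
pose s : 'rV[C]_n := \row_j (if 0 <= nu 0 j then 1 else -1).
have s1 k : `|s 0 k| <= 1 by rewrite mxE; case: ifP; rewrite ?normrN normr1.
have eS : (trnorm (X + Y))%:C =
    \tr ((W^t* *m diag_mx s *m W) *m X) + \tr ((W^t* *m diag_mx s *m W) *m Y).
  by rewrite -mxtraceD -mulmxDr eXY (trnorm_spectral uW nur) mxtrace_sign_spectral.
rewrite -lecR rmorphD -[X in X <= _]ger0_norm; last first.
  by rewrite ler0c trnorm_ge0 //; apply: hermmxD.
rewrite eS; apply: le_trans (ler_normD _ _) _.
by apply: lerD; apply: norm_mxtrace_le_trnorm.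
Qed.

Lemma tdistC n (X Y : 'M[C]_n) : tdist X Y = tdist Y X.
Proof. by rewrite /tdist -opprB trnormN. Qed.

Lemma tdist_triangle n (X Y Z : 'M[C]_n) : hermmx X -> hermmx Y -> hermmx Z ->
  tdist X Z <= tdist X Y + tdist Y Z.
Proof.
move=> hX hY hZ; rewrite /tdist -mulrDl ler_pM2r // -[X - Z](subrKA Y).
by apply: ler_trnormD; apply: hermmxB.
Qed.

End TraceNorm.

Section Battery.
Variable R : realType.
Local Notation C := R[i].

Lemma mxtrace_ket1bra1 : \tr (ket1bra1 R) = 1.
Proof. by rewrite /mxtrace !big_ord_recl big_ord0 !mxE /= add0r addr0. Qed.

Lemma mxtrace_piM (M : R) : \tr (piM M) = 1.
Proof. by rewrite /mxtrace !big_ord_recl big_ord0 !mxE /= addr0 -rmorphD subrK. Qed.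

Lemma piM1 : piM 1 = ket1bra1 R.
Proof.
by apply/matrixP => -[[|[|//]] ?] [[|[|//]] ?]; rewrite !mxE /= ?invr1 ?subrr.
Qed.

Lemma piMB (a b : R) :
  piM a - piM b = (a^-1 - b^-1)%:C *: (ket1bra1 R - delta_mx 0 0).
Proof.
by apply/matrixP => -[[|[|//]] ?] [[|[|//]] ?]; rewrite !mxE /= ?rmorphB /=; ring.
Qed.

End Battery.

Section WorkCost.
Variable R : realType.
Local Notation C := R[i].
Variables (n : nat) (cls : set ('M[C]_2 -> 'M[C]_n)) (eps : R) (P E : set 'M[C]_n).

Lemma work_cost_eq0 F :
  cls F -> (forall M, 1 < M -> feasible eps P E M F) -> work_cost cls eps P E = 0%E.
Proof.
move=> clsF feasF; rewrite /work_cost.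
set S := [set M : R | _].
have -> : S = `]1, +oo[%classic.
  apply/seteqP; split => M /=; rewrite in_itv /= andbT; first by case.
  by move=> hM; split => //; exists F; split => //; apply: feasF.
case: ifPn => [/asboolP/seteqP[/(_ 2)] | _]; last by rewrite inf_itv ?ln1.
by move=> /(_ _)/=; rewrite in_itv /= ltr1n => /(_ isT).
Qed.

Lemma work_cost_infeasible :
  (forall M F, 1 < M -> cls F -> ~ feasible eps P E M F) -> work_cost cls eps P E = +oo%E.
Proof.
move=> infeas; rewrite /work_cost; case: ifPn => // /asboolPn[].
by apply/seteqP; split => // M [hM [F [clsF feasF]]]; apply: infeas hM clsF feasF.
Qed.

Lemma ln_le_work_cost (x : R) :
  (forall M F, 1 < M -> cls F -> feasible eps P E M F -> x <= M) ->
  ((ln x)%:E <= work_cost cls eps P E)%E.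
Proof.
move=> x_le; rewrite /work_cost; set S := [set M : R | _].
case: ifPn => [_|/asboolPn S0]; first exact: leey.
have [M0 SM0] : S !=set0 by apply/set0P/eqP.
have inf_ge1 : 1 <= inf S by apply: lb_le_inf; [exists M0 | move=> M [/ltW]].
rewrite lee_fin; have [x_le0 | x_gt0] := leP x 0; first by rewrite ln0 // ln_ge0.
rewrite ler_ln ?posrE //; last exact: lt_le_trans ltr01 inf_ge1.
apply: lb_le_inf; first by exists M0.
by move=> M [hM [F [clsF feasF]]]; apply: x_le hM clsF feasF.
Qed.

End WorkCost.

Section TensorProduct.
Variable R : realType.
Local Notation C := R[i].

Lemma adjmx_tens m n p q (A : 'M[C]_(m, n)) (B : 'M[C]_(p, q)) :
  (tens A B)^t* = tens (A^t*) (B^t*).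
Proof.
apply/matrixP => i j.
case: (mxtens.mxtens_indexP i) => i1 i2; case: (mxtens.mxtens_indexP j) => j1 j2.
by rewrite /tens !mxE !mxtens.mxtens_indexK /= rmorphM.
Qed.

Lemma tens1mx m p : tens (1%:M : 'M[C]_m) (1%:M : 'M[C]_p) = 1%:M.
Proof.
apply/matrixP => i j.
case: (mxtens.mxtens_indexP i) => i1 i2; case: (mxtens.mxtens_indexP j) => j1 j2.
rewrite /tens mxtens.tensmxE !mxE (inj_eq (can_inj (@mxtens.mxtens_indexK _ _))).
by rewrite xpair_eqE -natrM mulnb.
Qed.

Lemma tens_unitarymx m p (A : 'M[C]_m) (B : 'M[C]_p) :
  A \is unitarymx -> B \is unitarymx -> tens A B \is unitarymx.
Proof.
move=> /unitarymxP uA /unitarymxP uB; apply/unitarymxP.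
by rewrite adjmx_tens /tens mxtens.tensmx_mul uA uB -/(tens _ _) tens1mx.
Qed.

Definition tens_swap m p (k : 'I_(m * p)) : 'I_(p * m) :=
  mxtens.mxtens_index ((mxtens.mxtens_unindex k).2, (mxtens.mxtens_unindex k).1).

Lemma tens_swap_bij m p : bijective (@tens_swap m p).
Proof.
by exists (@tens_swap p m) => k; case: (mxtens.mxtens_indexP k) => i j;
  rewrite /tens_swap !mxtens.mxtens_indexK.
Qed.

Lemma ptrace_tens_swap n (A : 'M[C]_2) (B : 'M[C]_n) :
  ptrace (\matrix_(k, l) tens A B (tens_swap k) (tens_swap l)) = \tr A *: B.
Proof.
apply/matrixP => i k; rewrite !mxE /mxtrace mulr_suml; apply: eq_bigr => j _.
by rewrite !mxE /tens_swap !mxtens.mxtens_indexK.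
Qed.

End TensorProduct.

Section Gibbs.
Variable R : realType.
Local Notation C := R[i].

(* A population p_j is the Gibbs weight of the energy -ln(p_j) / beta; an empty level gets
   infinite energy. *)
Definition gibbs_energy (beta : R) n (l : 'rV[C]_n) (j : 'I_n) : option R :=
  if 0 < complex.Re (l 0 j) then Some (- ln (complex.Re (l 0 j)) / beta) else None.

Section GibbsEnergy.
Variables (beta : R) (n : nat) (l : 'rV[C]_n).
Hypotheses (beta_gt0 : 0 < beta) (l_ge0 : forall j, 0 <= l 0 j) (l_sum1 : \sum_j l 0 j = 1).

Lemma gibbs_weight_energy j : (gibbs_weight beta (gibbs_energy beta l j))%:C = l 0 j.
Proof.
rewrite -[RHS](RRe_real (ger0_real (l_ge0 j))); congr (_%:C).
have : 0 <= complex.Re (l 0 j) by rewrite -lecR RRe_real ?ger0_real.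
rewrite /gibbs_energy le_eqVlt => /orP[/eqP <- | Re_gt0]; first by rewrite ltxx.
by rewrite Re_gt0 /= mulrCA divff ?gt_eqF // mulr1 opprK lnK.
Qed.

Lemma gibbs_state_energy (W : 'M[C]_n) :
  gibbs_state beta W (gibbs_energy beta l) = W^t* *m diag_mx l *m W.
Proof.
have Z1 : \sum_j gibbs_weight beta (gibbs_energy beta l j) = 1.
  apply: complexI; rewrite rmorph_sum rmorph1 -l_sum1.
  by apply: eq_bigr => j _; apply: gibbs_weight_energy.
rewrite /gibbs_state /adj Z1; apply: (congr1 (fun d => W^t* *m diag_mx d *m W)).
by apply/rowP => j; rewrite !mxE /= divr1 gibbs_weight_energy.
Qed.

Lemma gibbs_energy_finite : exists j, gibbs_energy beta l j <> None.
Proof.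
apply: contrapT => hnone; have : \sum_j l 0 j = 0.
  apply: big1 => j _; rewrite -gibbs_weight_energy.
  by have -> : gibbs_energy beta l j = None by apply: contrapT => hj; apply: hnone; exists j.
by rewrite l_sum1 => /eqP; rewrite oner_eq0.
Qed.

End GibbsEnergy.
End Gibbs.

Section ReplacerMap.
Variable R : realType.
Local Notation C := R[i].

Lemma replacer_feasible n (eps : R) (P E : set 'M[C]_n) (tau rho : 'M[C]_n) (M : R) :
  P rho -> tdist tau rho <= eps -> E tau -> feasible eps P E M (replacer tau).
Proof.
move=> Prho hrho Etau; split; first by exists rho; rewrite /replacer mxtrace_ket1bra1 scale1r.
by move=> _ [M' [_ ->]]; rewrite /replacer mxtrace_piM scale1r.
Qed.

Lemma replacer_thermal_op n (beta : R) (WB : 'M[C]_2) (hB : 'I_2 -> R) (tau : 'M[C]_n) :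
  0 < beta -> WB \is unitarymx -> density n tau -> thermal_op n beta WB hB (replacer tau).
Proof.
move=> beta_gt0 uWB [ptau ttau].
have [W [l [uW lr etau]]] := hermmx_spectral (psdmx_hermmx ptau).
have l_ge0 := psdmx_spectral_ge0 ptau uW etau.
have l_sum1 : \sum_j l 0 j = 1 by rewrite -(mxtrace_spectral uW) -etau.
have u1 : (1%:M : 'M[C]_(2 * n)) \is unitarymx.
  by apply/unitarymxP; rewrite trmx1 map_mx1 mulmx1.
exists n, 2, W, (gibbs_energy beta l), 1%:M, (@tens_swap n 2); split.
- by split.
- exact: gibbs_energy_finite beta_gt0 l_ge0 l_sum1.
- move=> k k' hkk'; rewrite mulmx1 (unitarymxP (tens_unitarymx uWB uW)) mxE.
  by case: eqVneq hkk' => // ->.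
- exact: tens_swap_bij.
move=> rho; rewrite (gibbs_state_energy beta_gt0 l_ge0 l_sum1) -etau.
by rewrite /adj trmx1 map_mx1 mul1mx mulmx1 ptrace_tens_swap.
Qed.

End ReplacerMap.

Section LinearFeasible.
Variable R : realType.
Local Notation C := R[i].
Variables (n : nat) (eps : R) (P E : set 'M[C]_n) (M : R) (F : 'M[C]_2 -> 'M[C]_n).
Hypotheses (hP : P `<=` density n) (hE : E `<=` density n) (hM : 1 < M)
  (linF : linear F) (feasF : feasible eps P E M F).

Let G := F (ket1bra1 R) - F (delta_mx 0 0).
Let t := trnorm G / 2.

Let M_gt0 : 0 < M. Proof. exact: lt_trans hM. Qed.

Lemma FpiMB a b : F (piM a) - F (piM b) = (a^-1 - b^-1)%:C *: G.
Proof.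
pose Fl : {linear 'M[C]_2 -> 'M[C]_n} := HB.pack F (GRing.isLinear.Build _ _ _ _ F linF).
by rewrite -[LHS](linearB Fl) piMB linearZ linearB.
Qed.

Lemma FpiM_in_E M' : M <= M' -> E (F (piM M')).
Proof. by move=> hM'; apply: feasF.2; exists M'. Qed.

Lemma hermmx_G : hermmx G.
Proof.
have hM2 : M <= M * 2 by rewrite ler_peMr ?ler1n ?ltW.
have c_gt0 : 0 < M^-1 - (M * 2)^-1.
  by rewrite subr_gt0 ltf_pV2 ?posrE ?mulr_gt0 // ltr_pMr // ltr1n.
have := hermmxB (psdmx_hermmx (hE (FpiM_in_E (lexx M))).1) (psdmx_hermmx (hE (FpiM_in_E hM2)).1).
rewrite FpiMB => /(@hermmxZ _ _ ((M^-1 - (M * 2)^-1)^-1)%:C); rewrite complex_real eqxx.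
by rewrite scalerA -rmorphM mulVf ?gt_eqF // rmorph1 scale1r; apply.
Qed.

Lemma hermmx_FpiM a : hermmx (F (piM a)).
Proof.
rewrite -[F (piM a)](subrKC (F (piM M))) FpiMB.
apply: hermmxD; first exact: (psdmx_hermmx (hE (FpiM_in_E (lexx M))).1).
by apply: hermmxZ hermmx_G; rewrite complex_real.
Qed.

Lemma tdist_FpiM a b : tdist (F (piM a)) (F (piM b)) = `|a^-1 - b^-1| * t.
Proof. by rewrite /tdist /t FpiMB (trnormZ _ hermmx_G) mulrA. Qed.

Lemma tdist_sets_le : (tdist_sets P E <= (eps + (1 - M^-1) * t)%:E)%E.
Proof.
case: feasF => -[rho [Prho hrho]] _.
apply: le_trans (ereal_inf_lbound _) _.
  by exists rho, (F (piM M)); split; [|split; [apply: FpiM_in_E|]].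
rewrite lee_fin.
have hrho_herm : hermmx rho by apply/psdmx_hermmx; case: (hP Prho).
apply: le_trans (tdist_triangle hrho_herm (hermmx_FpiM 1) (hermmx_FpiM M)) _.
apply: lerD; first by rewrite tdistC piM1.
rewrite tdist_FpiM invr1 ger0_norm // subr_ge0 invf_le1 ?ltW //.
Qed.

Lemma diam_set_ge M' : M <= M' -> (((M^-1 - M'^-1) * t)%:E <= diam_set E)%E.
Proof.
move=> hM'; apply: ereal_sup_ubound; exists (F (piM M)), (F (piM M')).
split; first exact: FpiM_in_E; split; first exact: FpiM_in_E.
rewrite tdist_FpiM ger0_norm // subr_ge0 lef_pV2 ?posrE //.
exact: lt_le_trans hM'.
Qed.

(* Compare pi_M with pi_{M^2}: (1 - 1/M) t = M (1/M - 1/M^2) t. *)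
Lemma feasible_gap_le : (tdist_sets P E - eps%:E <= M%:E * diam_set E)%E.
Proof.
have hMM : M <= M * M by rewrite ler_peMr ?ltW.
rewrite leeBlDl //; apply: le_trans tdist_sets_le _.
have -> : (1 - M^-1) * t = M * ((M^-1 - (M * M)^-1) * t).
  by field; rewrite gt_eqF.
rewrite EFinD leeD2l // EFinM; apply: lee_wpmul2l; first by rewrite lee_fin ltW.
exact: diam_set_ge.
Qed.

End LinearFeasible.

Lemma fine_div_le (R : realType) (g d : \bar R) (M : R) :
  0 < M -> (0 < g)%E -> (g <= M%:E * d)%E -> fine g / fine d <= M.
Proof.
move=> M_gt0; case: d => [d| |]; last 2 first.
- by move=> _ _; rewrite /= invr0 mulr0 ltW.
- by rewrite mulrNy gtr0_sg // mul1e leeNy_eq => + /eqP gNy; rewrite gNy.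
case: g => [g| |]; last 2 first.
- by move=> _; rewrite -EFinM leye_eq.
- by rewrite ltNge leNye.
rewrite -EFinM !lee_fin lte_fin /= => g_gt0 g_le.
have d_gt0 : 0 < d by rewrite -(pmulr_rgt0 _ M_gt0); apply: lt_le_trans g_le.
by rewrite ler_pdivrMr // mulrC.
Qed.

Lemma rhs_b_le_work_cost (R : realType) n (eps : R) (P E : set 'M[R[i]]_n) :
  P `<=` density n -> E `<=` density n -> (eps%:E < tdist_sets P E)%E ->
  (rhs_b eps P E <= work_cost (GPL n) eps P E)%E.
Proof.
move=> hP hE; rewrite -sube_gt0 => gap_gt0.
have gap_le M F : 1 < M -> GPL n F -> feasible eps P E M F ->
    (tdist_sets P E - eps%:E <= M%:E * diam_set E)%E.
  by move=> hM linF feasF; apply: feasible_gap_le hP hE hM linF feasF.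
rewrite /rhs_b; case: ifPn => [/eqP diam0 | _].
  rewrite work_cost_infeasible ?leey // => M F hM linF feasF.
  by move: (gap_le M F hM linF feasF); rewrite diam0 mule0 leNgt gap_gt0.
apply: ln_le_work_cost => M F hM linF feasF.
exact: fine_div_le (lt_trans ltr01 hM) gap_gt0 (gap_le M F hM linF feasF).
Qed.

Unset Implicit Arguments.

Theorem propositionS3 (R : realType) (n : nat) (eps : R)
  (P E : set 'M[R[i]]_n) :
  0 <= eps < 1 -> P `<=` density n -> E `<=` density n ->
  (* (a) *)
  ((ball_set eps P `&` E !=set0) ->
     (forall (beta : R) (WB : 'M[R[i]]_2) (hB : 'I_2 -> R),
        0 < beta -> WB \is unitarymx ->
        work_cost (thermal_op n beta WB hB) eps P E = 0%E) /\
     (exists tau, E tau /\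
        (forall (beta : R) (WB : 'M[R[i]]_2) (hB : 'I_2 -> R),
           0 < beta -> WB \is unitarymx -> thermal_op n beta WB hB (replacer tau)) /\
        (forall M : R, 1 < M -> feasible eps P E M (replacer tau)))) /\
  (* (b) *)
  ((eps%:E < tdist_sets P E)%E ->
     (rhs_b eps P E <= work_cost (GPL n) eps P E)%E).
Proof.
move=> _ hP hE; split; last exact: rhs_b_le_work_cost.
move=> [tau [[tau_dens [rho [Prho hrho]]] Etau]].
have feas M : feasible eps P E M (replacer tau) := replacer_feasible M Prho hrho Etau.
have TO beta WB hB : 0 < beta -> WB \is unitarymx -> thermal_op n beta WB hB (replacer tau).
  by move=> beta_gt0 uWB; apply: replacer_thermal_op.
split; last by exists tau.
by move=> beta WB hB beta_gt0 uWB; apply: work_cost_eq0 (TO _ _ _ beta_gt0 uWB) (fun M _ => feas M).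
Qed.
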